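(* For all real $h,t$ with $0<h<t<1$, $$\lim_{k \to \infty} \sum_{n=0}^{\infty} B^n_k(t;h) = \frac{1-h}{t-h},$$ where the limit is over nonnegative integers $k$.
   Context: For $h\ge 0$, the $h$-Bernstein polynomials are $$B^n_k(t;h) = \binom{n}{k}\frac{\prod_{i=0}^{k-1}(t+ih)\prod_{i=0}^{n-k-1}(1-t+ih)}{\prod_{i=0}^{n-1}(1+ih)}$$ for integers $0\le k\le n$ (empty products equal $1$), and $B^n_k(t;h)=0$ for $n<k$. *)

From Stdlib Require Import Reals Arith.
From Coquelicot Require Import Coquelicot.
Open Scope R_scope.

Fixpoint rising (x h : R) (m : nat) : R :=
  match m with
  | O => 1
  | S m' => rising x h m' * (x + INR m' * h)
  end.

Definition hBernstein (n k : nat) (t h : R) : R :=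
  if (k <=? n)%nat then
    Binomial.C n k * rising t h k * rising (1 - t) h (n - k) / rising 1 h n
  else 0.

From Stdlib Require Import Reals Lra Lia.
From Coquelicot Require Import Coquelicot.
Open Scope R_scope.

(* [B^n_k(t;h)] is the Polya-Eggenberger law [polya t (1-t) h n k]: the probability of
   exactly [k] draws of the first colour in [n] draws from an urn with colour weights
   [t] and [1 - t], where every draw adds [h] to the weight of the colour drawn.
   Let [G_k(n)] be the probability of at most [k] such draws from the urn with weights
   [t - h] and [1 - t]. [G_k(n) - G_k(n+1)] is the probability that draw [n+1] is the
   [(k+1)]-th draw of the first colour, which Pascal's rule for the urn identifies with
   [(t - h)/(1 - h) * B^n_k(t;h)]. Hence the series telescopes to
   [(1 - h)/(t - h) * (G_k(0) - lim_n G_k(n)) = (1 - h)/(t - h)] for every [k]: each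
   term of [G_k(n)] tends to [0], because the [j = 0] term is
   [prod_{i<n} (1-t+ih)/(1-h+ih) <= 1/(1 + c log (n+1))] for some [c > 0], and the
   [(j+1)]-th term at [n+1] is at most a constant times the [j]-th term at [n]. *)

Lemma rising_S x h m : rising x h (S m) = rising x h m * (x + INR m * h).
Proof. reflexivity. Qed.

Lemma rising_S_shift x h m : rising x h (S m) = x * rising (x + h) h m.
Proof.
  induction m as [|m IH].
  - simpl. ring.
  - rewrite rising_S, IH, rising_S, S_INR. ring.
Qed.

Lemma rising_pos x h m : 0 < x -> 0 <= h -> 0 < rising x h m.
Proof.
  intros Hx Hh; induction m as [|m IH]; simpl; [lra|].
  apply Rmult_lt_0_compat; [exact IH|].
  assert (0 <= INR m * h) by (apply Rmult_le_pos; [apply pos_INR|lra]). lra.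
Qed.

Lemma ln_succ_sub_le x : 0 < x -> ln (x + 1) - ln x <= / x.
Proof.
  intro Hx.
  assert (Hinv : 0 < / x) by (apply Rinv_0_lt_compat; lra).
  replace (x + 1) with (x * (1 + / x)) by (field; lra).
  rewrite ln_mult by lra.
  enough (ln (1 + / x) <= / x) by lra.
  rewrite <- (ln_exp (/ x)) at 2. apply ln_le; [lra|apply exp_ineq1_le].
Qed.

Lemma ln_INR_succ_nonneg n : 0 <= ln (INR n + 1).
Proof. rewrite <- ln_1. apply ln_le; [lra|]. pose proof (pos_INR n). lra. Qed.

Lemma is_lim_seq_ln_INR : is_lim_seq (fun n => ln (INR n + 1)) p_infty.
Proof.
  apply (filterlim_comp _ _ _ (fun n => INR n + 1) ln _ (Rbar_locally p_infty));
    [|exact is_lim_ln_p].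
  apply is_lim_seq_le_p_loc with INR; [|exact is_lim_seq_INR].
  exists O. intros n _. lra.
Qed.

Section RisingRatio.
Variables a b h : R.
Hypotheses (Ha : 0 < a) (Hb : 0 < b) (Hh : 0 < h).

Lemma rising_ratio_ln_bound n :
  rising b h n * (1 + a / (b + h) * ln (INR n + 1)) <= rising (b + a) h n.
Proof.
  induction n as [|n IH].
  - simpl. rewrite Rplus_0_l, ln_1. lra.
  - rewrite !rising_S, S_INR.
    set (c := a / (b + h)) in *.
    set (L0 := ln (INR n + 1)) in *.
    assert (Hn : 0 <= INR n) by apply pos_INR.
    assert (HL0 : 0 <= L0) by apply ln_INR_succ_nonneg.
    assert (Hc : 0 < c) by (unfold c; apply Rdiv_lt_0_compat; lra).
    assert (Hr : 0 < rising b h n) by (apply rising_pos; lra).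
    (* [ln (n + 2) - ln (n + 1) <= 1 / (n + 1)] and [b + n h <= (b + h)(n + 1)] *)
    assert (Hstep : c * (ln (INR n + 1 + 1) - L0) * (b + INR n * h) <= a).
    { apply Rle_trans with (c * / (INR n + 1) * (b + INR n * h)).
      - apply Rmult_le_compat_r; [nra|].
        apply Rmult_le_compat_l; [lra|]. apply ln_succ_sub_le. lra.
      - replace a with (c * / (INR n + 1) * ((b + h) * (INR n + 1))) by (unfold c; field; lra).
        apply Rmult_le_compat_l; [|nra].
        apply Rmult_le_pos; [lra|]. apply Rlt_le, Rinv_0_lt_compat. lra. }
    apply Rle_trans with (rising b h n * (1 + c * L0) * (b + a + INR n * h)).
    + rewrite !Rmult_assoc. apply Rmult_le_compat_l; [lra|].
      assert (0 <= c * L0 * a) by (apply Rmult_le_pos; [apply Rmult_le_pos|]; lra).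
      nra.
    + apply Rmult_le_compat_r; [nra|exact IH].
Qed.

Lemma is_lim_seq_rising_ratio :
  is_lim_seq (fun n => rising b h n / rising (b + a) h n) 0.
Proof.
  set (c := a / (b + h)).
  assert (Hc : 0 < c) by (unfold c; apply Rdiv_lt_0_compat; lra).
  apply is_lim_seq_le_le with (fun _ => 0) (fun n => / (1 + c * ln (INR n + 1))).
  - intro n.
    pose proof (ln_INR_succ_nonneg n).
    assert (Hr : 0 < rising b h n) by (apply rising_pos; lra).
    assert (Hra : 0 < rising (b + a) h n) by (apply rising_pos; lra).
    split.
    + apply Rdiv_le_0_compat; lra.
    + apply Rle_div_l; [lra|].
      apply Rmult_le_reg_l with (1 + c * ln (INR n + 1)); [nra|].
      rewrite <- Rmult_assoc, Rinv_r, Rmult_1_l by nra.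
      rewrite Rmult_comm. apply rising_ratio_ln_bound.
  - apply is_lim_seq_const.
  - replace (Finite 0) with (Rbar_inv p_infty) by reflexivity.
    apply is_lim_seq_inv; [|discriminate].
    apply is_lim_seq_le_p_loc with (fun n => ln (INR n + 1) * c).
    + exists O. intros n _. pose proof (ln_INR_succ_nonneg n). nra.
    + apply is_lim_seq_mult with p_infty c.
      * exact is_lim_seq_ln_INR.
      * apply is_lim_seq_const.
      * apply is_Rbar_mult_p_infty_pos. exact Hc.
Qed.

End RisingRatio.

Lemma C_succ_succ n j : INR (S j) * Binomial.C (S n) (S j) = INR (S n) * Binomial.C n j.
Proof.
  unfold Binomial.C. simpl (S n - S j)%nat. rewrite !fact_simpl, !mult_INR.
  pose proof (INR_fact_neq_0 j). pose proof (INR_fact_neq_0 (n - j)).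
  pose proof (INR_fact_neq_0 n). pose proof (pos_INR j).
  field. repeat split; try lra. rewrite S_INR. lra.
Qed.

Lemma C_nonneg n j : 0 <= Binomial.C n j.
Proof.
  unfold Binomial.C. apply Rdiv_le_0_compat; [apply pos_INR|].
  apply Rmult_lt_0_compat; apply INR_fact_lt_0.
Qed.

Definition polya (a b h : R) (n j : nat) : R :=
  if (j <=? n)%nat then
    Binomial.C n j * rising a h j * rising b h (n - j) / rising (a + b) h n
  else 0.

Definition polya_cdf (a b h : R) (k n : nat) : R := sum_f_R0 (fun j => polya a b h n j) k.

Lemma hBernstein_polya n k t h : hBernstein n k t h = polya (t - h + h) (1 - t) h n k.
Proof.
  unfold hBernstein, polya.
  replace (t - h + h) with t by ring. replace (t + (1 - t)) with 1 by ring.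
  reflexivity.
Qed.

Lemma polya_le a b h n j : (j <= n)%nat ->
  polya a b h n j = Binomial.C n j * rising a h j * rising b h (n - j) / rising (a + b) h n.
Proof. intro Hjn. unfold polya. rewrite (proj2 (Nat.leb_le j n) Hjn). reflexivity. Qed.

Lemma polya_gt a b h n j : (n < j)%nat -> polya a b h n j = 0.
Proof. intro Hnj. unfold polya. rewrite (proj2 (Nat.leb_gt j n) Hnj). reflexivity. Qed.

Section PolyaIdentities.
Variables a b h : R.
Hypotheses (Ha : 0 < a) (Hb : 0 < b) (Hh : 0 <= h).

Let s := a + b.

Lemma polya_nonneg n j : 0 <= polya a b h n j.
Proof.
  destruct (Nat.le_gt_cases j n) as [Hjn|Hnj]; [|rewrite polya_gt by exact Hnj; lra].
  rewrite polya_le by exact Hjn.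
  apply Rdiv_le_0_compat; [|apply rising_pos; lra].
  apply Rmult_le_pos; [apply Rmult_le_pos|]; [apply C_nonneg| |]; apply Rlt_le, rising_pos; lra.
Qed.

Lemma polya_cdf_0 k : polya_cdf a b h k 0 = 1.
Proof.
  unfold polya_cdf. induction k as [|k IH]; simpl sum_f_R0.
  - rewrite polya_le by lia. simpl. unfold Binomial.C. simpl. field.
  - rewrite IH, polya_gt by lia. ring.
Qed.

Lemma polya_pascal n j :
  polya a b h (S n) (S j) * (s + INR n * h)
  = polya a b h n (S j) * (b + INR (n - S j) * h) + polya a b h n j * (a + INR j * h).
Proof.
  assert (Hs : 0 < s + INR n * h).
  { pose proof (pos_INR n). unfold s. nra. }
  assert (Hr : 0 < rising s h n) by (apply rising_pos; unfold s; lra).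
  destruct (Nat.lt_trichotomy j n) as [Hjn|[->|Hnj]].
  - rewrite !polya_le by lia. fold s.
    replace (S n - S j)%nat with (S (n - S j)) by lia.
    replace (n - j)%nat with (S (n - S j)) by lia.
    rewrite <- (pascal n j Hjn), !rising_S.
    field. lra.
  - rewrite (polya_gt _ _ _ n (S n)), !polya_le, !Nat.sub_diag, !C_n_n by lia. fold s.
    rewrite !rising_S. field. lra.
  - rewrite !polya_gt by lia. ring.
Qed.

Lemma polya_pascal_0 n :
  polya a b h (S n) 0 * (s + INR n * h) = polya a b h n 0 * (b + INR n * h).
Proof.
  assert (Hs : 0 < s + INR n * h).
  { pose proof (pos_INR n). unfold s. nra. }
  assert (Hr : 0 < rising s h n) by (apply rising_pos; unfold s; lra).
  rewrite !polya_le, !C_n_0, !Nat.sub_0_r by lia. fold s.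
  rewrite !rising_S. field. lra.
Qed.

Lemma polya_cdf_decrement k n :
  (s + INR n * h) * (polya_cdf a b h k n - polya_cdf a b h k (S n))
  = polya a b h n k * (a + INR k * h).
Proof.
  unfold polya_cdf. induction k as [|k IH]; simpl sum_f_R0.
  - rewrite Rmult_minus_distr_l, (Rmult_comm _ (polya _ _ _ (S n) 0)), polya_pascal_0.
    change (INR 0) with 0. unfold s. ring.
  - rewrite Rmult_minus_distr_l in IH |- *.
    rewrite Rmult_plus_distr_l, Rmult_plus_distr_l.
    rewrite (Rmult_comm _ (polya _ _ _ (S n) (S k))), polya_pascal.
    destruct (Nat.le_gt_cases (S k) n) as [Hkn|Hnk].
    + rewrite minus_INR, S_INR by exact Hkn. unfold s in *. lra.
    + rewrite polya_gt by exact Hnk. rewrite S_INR. lra.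
Qed.

Lemma polya_shift n k :
  s * polya a b h n k * (a + INR k * h) = a * (s + INR n * h) * polya (a + h) b h n k.
Proof.
  destruct (Nat.le_gt_cases k n) as [Hkn|Hnk]; [|rewrite !polya_gt by exact Hnk; ring].
  rewrite !polya_le by exact Hkn. fold s.
  replace (a + h + b) with (s + h) by (unfold s; ring).
  assert (Hs : 0 < s) by (unfold s; lra).
  assert (Hsn : 0 < s + INR n * h) by (pose proof (pos_INR n); nra).
  assert (Ea : rising (a + h) h k = rising a h k * (a + INR k * h) / a).
  { rewrite <- rising_S, rising_S_shift. field. lra. }
  assert (Es : rising (s + h) h n = rising s h n * (s + INR n * h) / s).
  { rewrite <- rising_S, rising_S_shift. field. lra. }
  assert (Hr : 0 < rising s h n) by (apply rising_pos; lra).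
  rewrite Ea, Es. field. repeat split; lra.
Qed.

Lemma polya_shift_telescope n k :
  polya (a + h) b h n k = s / a * (polya_cdf a b h k n - polya_cdf a b h k (S n)).
Proof.
  assert (Hsn : 0 < s + INR n * h) by (pose proof (pos_INR n); unfold s; nra).
  assert (Hak : 0 < a + INR k * h) by (pose proof (pos_INR k); nra).
  apply Rmult_eq_reg_l with (a * (s + INR n * h)); [|nra].
  rewrite <- polya_shift, Rmult_assoc, <- polya_cdf_decrement. field. lra.
Qed.

Lemma sum_polya_shift k N :
  sum_f_R0 (fun n => polya (a + h) b h n k) N = s / a * (1 - polya_cdf a b h k (S N)).
Proof.
  induction N as [|N IH]; simpl sum_f_R0.
  - rewrite polya_shift_telescope, polya_cdf_0. reflexivity.
  - rewrite IH, polya_shift_telescope. ring.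
Qed.

Lemma polya_succ_succ n j :
  INR (S j) * (s + INR n * h) * polya a b h (S n) (S j)
  = INR (S n) * (a + INR j * h) * polya a b h n j.
Proof.
  destruct (Nat.le_gt_cases j n) as [Hjn|Hnj]; [|rewrite !polya_gt by lia; ring].
  rewrite !polya_le by lia. simpl (S n - S j)%nat. fold s.
  assert (Hsn : 0 < s + INR n * h) by (pose proof (pos_INR n); unfold s; nra).
  assert (Hr : 0 < rising s h n) by (apply rising_pos; unfold s; lra).
  assert (HSj : INR (S j) <> 0) by (apply not_0_INR; lia).
  assert (EC : Binomial.C (S n) (S j) = INR (S n) * Binomial.C n j / INR (S j)).
  { rewrite <- C_succ_succ. field. exact HSj. }
  rewrite EC, !rising_S. field. split; lra.
Qed.

End PolyaIdentities.

Section PolyaLimits.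
Variables a b h : R.
Hypotheses (Ha : 0 < a) (Hb : 0 < b) (Hh : 0 < h).

Lemma polya_succ_succ_le n j :
  polya a b h (S n) (S j) <= (/ (a + b) + / h) * (a + INR j * h) / INR (S j) * polya a b h n j.
Proof.
  pose proof (pos_INR n) as Hn. pose proof (pos_INR j) as Hj.
  assert (HSj : 0 < INR (S j)) by (rewrite S_INR; lra).
  assert (Hsn : 0 < a + b + INR n * h) by nra.
  assert (Hp : 0 <= polya a b h n j) by (apply polya_nonneg; lra).
  assert (Hcoef : INR (S n) <= (/ (a + b) + / h) * (a + b + INR n * h)).
  { rewrite S_INR. field_simplify; [|lra..].
    apply Rle_div_r; [nra|]. nra. }
  apply Rmult_le_reg_l with (INR (S j) * (a + b + INR n * h)); [nra|].
  rewrite polya_succ_succ by lra.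
  replace (INR (S j) * (a + b + INR n * h) *
           ((/ (a + b) + / h) * (a + INR j * h) / INR (S j) * polya a b h n j))
    with ((/ (a + b) + / h) * (a + b + INR n * h) * (a + INR j * h) * polya a b h n j)
    by (field; lra).
  apply Rmult_le_compat_r; [exact Hp|].
  apply Rmult_le_compat_r; [nra|exact Hcoef].
Qed.

Lemma is_lim_seq_polya j : is_lim_seq (fun n => polya a b h n j) 0.
Proof.
  induction j as [|j IH].
  - apply is_lim_seq_ext with (fun n => rising b h n / rising (b + a) h n).
    + intro n. rewrite polya_le, C_n_0, Nat.sub_0_r, (Rplus_comm a b) by lia.
      change (rising a h 0) with 1. rewrite !Rmult_1_l. reflexivity.
    + apply is_lim_seq_rising_ratio; assumption.
  - apply is_lim_seq_incr_1.
    set (c := (/ (a + b) + / h) * (a + INR j * h) / INR (S j)).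
    apply is_lim_seq_le_le with (fun _ => 0) (fun n => c * polya a b h n j).
    + intro n. split; [apply polya_nonneg; lra|apply polya_succ_succ_le].
    + apply is_lim_seq_const.
    + replace (Finite 0) with (Rbar_mult c 0) by (simpl; f_equal; ring).
      apply is_lim_seq_scal_l, IH.
Qed.

Lemma is_lim_seq_polya_cdf k : is_lim_seq (polya_cdf a b h k) 0.
Proof.
  unfold polya_cdf. induction k as [|k IH]; simpl sum_f_R0.
  - apply is_lim_seq_polya.
  - replace (Finite 0) with (Finite (0 + 0)) by (f_equal; ring).
    apply is_lim_seq_plus'; [exact IH|apply is_lim_seq_polya].
Qed.

Lemma is_series_polya_shift k : is_series (fun n => polya (a + h) b h n k) ((a + b) / a).
Proof.
  enough (H : is_lim_seq (sum_n (fun n => polya (a + h) b h n k)) ((a + b) / a)) by exact H.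
  apply (is_lim_seq_ext (fun N => (a + b) / a * (1 - polya_cdf a b h k (S N)))).
  - intro N. rewrite sum_n_Reals. symmetry. apply sum_polya_shift; lra.
  - replace (Finite ((a + b) / a)) with (Rbar_mult ((a + b) / a) (1 - 0)) by (simpl; f_equal; ring).
    apply is_lim_seq_scal_l, is_lim_seq_minus'; [apply is_lim_seq_const|].
    apply (is_lim_seq_incr_1 (polya_cdf a b h k)), is_lim_seq_polya_cdf.
Qed.

End PolyaLimits.

Theorem mainTheorem10 (h t : R) :
  0 < h -> h < t -> t < 1 ->
  (forall k : nat, ex_series (fun n : nat => hBernstein n k t h)) /\
  is_lim_seq (fun k : nat => Series (fun n : nat => hBernstein n k t h))
             ((1 - h) / (t - h)).
Proof.
  intros Hh Hht Ht1.
  assert (Hsum : forall k, is_series (fun n => hBernstein n k t h) ((1 - h) / (t - h))).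
  { intro k. replace (1 - h) with (t - h + (1 - t)) by ring.
    apply (is_series_ext (fun n => polya (t - h + h) (1 - t) h n k)).
    - intro n. symmetry. apply hBernstein_polya.
    - apply is_series_polya_shift; lra. }
  split.
  - intro k. exists ((1 - h) / (t - h)). apply Hsum.
  - apply (is_lim_seq_ext (fun _ => (1 - h) / (t - h))).
    + intro k. symmetry. apply is_series_unique, Hsum.
    + apply is_lim_seq_const.
Qed.
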